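(* Let $S$ be the free semigroup on countably many generators, enumerated as $\vec{s}=(s_n)_{n\in\omega}$. Every very strongly productive ultrafilter on $S$ is multiplicatively isomorphic to an ordered union ultrafilter, and hence is sparse.
   Context: For a sequence $\vec{x}=(x_n)_{n\in\omega}$ in $S$, $\mathrm{FP}(\vec{x})$ is the set of products $\prod_{i\in a}x_i$ (increasing order of indices), $a$ a finite nonempty subset of $\omega$. A sequence $\vec{y}$ is a product subsystem of $\vec{x}$ if there are finite nonempty $a_n\subseteq\omega$ with $\max a_n<\min a_{n+1}$ and $y_n=\prod_{i\in a_n}x_i$ for all $n$. An ultrafilter $p$ on $S$ is very strongly productive if every $A\in p$ contains some $\mathrm{FP}(\vec{x})\in p$ with $\vec{x}$ a product subsystem of $\vec{s}$. $\mathbb{F}$ is the partial semigroup of finite nonempty subsets of $\omega$ with $ab=a\cup b$ defined iff $\max a<\min b$; an ordered union ultrafilter is an ultrafilter $\mathcal{U}$ on $\mathbb{F}$ such that every member contains some $\mathrm{FP}(\vec{b})\in\mathcal{U}$ for a sequence $\vec{b}$ in $\mathbb{F}$ with $\max b_i<\min b_{i+1}$. $p$ is multiplicatively isomorphic to an ordered union ultrafilter if for some sequence $\vec{x}$ in $S$ the map $f:\mathbb{F}\to\mathrm{FP}(\vec{x})$, $f(a)=\prod_{i\in a}x_i$, is injective and $\{f^{-1}[A]:A\in p\}$ is an ordered union ultrafilter. $p$ is sparse if for every $A\in p$ there are a sequence $\vec{x}$ in $S$ and a subsequence $\vec{y}=(x_{k_n})_n$ ($k_0<k_1<\cdots$)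 with $\mathrm{FP}(\vec{y})\in p$, $\mathrm{FP}(\vec{x})\subseteq A$, and $\{k_n:n\in\omega\}$ coinfinite in $\omega$. *)

From Stdlib Require Import Arith List.
Import ListNotations.

(** The free semigroup on countably many generators: nonempty words over nat,
    a word being stored as (first letter, remaining letters). *)
Record FreeSg := mkS { shd : nat; stl : list nat }.

Definition mulS (u v : FreeSg) : FreeSg := mkS (shd u) (stl u ++ shd v :: stl v).

Definition gen (n : nat) : FreeSg := mkS n [].

(** Finite nonempty subsets of omega, as strictly increasing nonempty lists
    (min element, then the rest in increasing order). *)
Fixpoint sortedb (i : nat) (l : list nat) : bool :=
  match l with
  | [] => true
  | j :: l' => (i <? j) && sortedb j l'
  end.

Record Fin := mkFin { fmin : nat; frest : list nat;
                      fsorted : sortedb fmin frest = true }.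

Definition fin_list (a : Fin) : list nat := fmin a :: frest a.
Definition fmax (a : Fin) : nat := last (fin_list a) 0.

Fixpoint prodS (x : nat -> FreeSg) (i : nat) (l : list nat) : FreeSg :=
  match l with
  | [] => x i
  | j :: l' => mulS (x i) (prodS x j l')
  end.

Definition prodF (x : nat -> FreeSg) (a : Fin) : FreeSg := prodS x (fmin a) (frest a).

Definition FP (x : nat -> FreeSg) : FreeSg -> Prop := fun y => exists a : Fin, y = prodF x a.

Definition product_subsystem (x y : nat -> FreeSg) : Prop :=
  exists a : nat -> Fin,
    (forall n, fmax (a n) < fmin (a (S n))) /\ (forall n, y n = prodF x (a n)).

Definition ultrafilter {X : Type} (U : (X -> Prop) -> Prop) : Prop :=
  U (fun _ => True) /\
  ~ U (fun _ => False) /\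
  (forall A B : X -> Prop, U A -> (forall z, A z -> B z) -> U B) /\
  (forall A B : X -> Prop, U A -> U B -> U (fun z => A z /\ B z)) /\
  (forall A : X -> Prop, U A \/ U (fun z => ~ A z)).

Definition subset {X : Type} (A B : X -> Prop) : Prop := forall z, A z -> B z.

Definition very_strongly_productive (p : (FreeSg -> Prop) -> Prop) : Prop :=
  ultrafilter p /\
  forall A, p A -> exists x : nat -> FreeSg,
    product_subsystem gen x /\ p (FP x) /\ subset (FP x) A.

(** FP(b) in the partial semigroup F: products (= ordered unions, i.e.
    concatenations of the increasing lists) of b_i over finite nonempty c. *)
Definition FPF (b : nat -> Fin) : Fin -> Prop :=
  fun a => exists c : Fin,
    fin_list a = concat (map (fun i => fin_list (b i)) (fin_list c)).

Definition ordered_union_ultrafilter (U : (Fin -> Prop) -> Prop) : Prop :=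
  ultrafilter U /\
  forall A, U A -> exists b : nat -> Fin,
    (forall n, fmax (b n) < fmin (b (S n))) /\ U (FPF b) /\ subset (FPF b) A.

Definition mult_iso_ordered_union (p : (FreeSg -> Prop) -> Prop) : Prop :=
  exists x : nat -> FreeSg,
    (forall a b : Fin, prodF x a = prodF x b -> a = b) /\
    ordered_union_ultrafilter
      (fun B : Fin -> Prop =>
         exists A, p A /\ forall a : Fin, B a <-> A (prodF x a)).

Definition sparse (p : (FreeSg -> Prop) -> Prop) : Prop :=
  forall A, p A -> exists (x : nat -> FreeSg) (k : nat -> nat),
    (forall n, k n < k (S n)) /\
    p (FP (fun n => x (k n))) /\
    subset (FP x) A /\
    (forall m, exists n, m <= n /\ forall i, k i <> n).

From Stdlib Require Import Arith List Lia Bool Eqdep_dec ClassicalEpsilon.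
Import ListNotations.

(** An element of S is identified with its word of letters.  If x is a product
    subsystem of s with blocks bl_n, then x_n is the increasing word listing
    bl_n, and prod_(i in d) x_i is the word of the ordered union of the blocks
    bl_i, i in d.  Consequently prodF x is injective, and FP(x) corresponds to
    FPF(bl) under the injection a |-> prod_(i in a) s_i.

    Part 1: FP(s) belongs to p, so p pulls back along a |-> prod_(i in a) s_i
    to an ultrafilter on F, and pulled back FP(x)'s are FPF(bl)'s.
    Part 2 (parity of runs): given A in p, take FP(x) in p inside A and refine
    it to FP(z) in p, z_n = prod_(i in d_n) x_i, all of whose index sets have
    the same parity of number of maximal intervals.  Additivity of this count
    on non-adjacent unions forces even parity and gaps between consecutive
    d_n; filling each gap with one extra term of x gives x' with z = x'_(2n),
    the odd positions being the required coinfinite complement. *)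

Definition word (w : FreeSg) : list nat := shd w :: stl w.
Arguments word : simpl never.

Lemma word_mulS (u v : FreeSg) : word (mulS u v) = word u ++ word v.
Proof. destruct u, v; reflexivity. Qed.

Lemma word_inj (u v : FreeSg) : word u = word v -> u = v.
Proof. destruct u, v; unfold word; simpl; intros H; inversion H; reflexivity. Qed.

Lemma word_prodS (x : nat -> FreeSg) (i : nat) (l : list nat) :
  word (prodS x i l) = concat (map (fun k => word (x k)) (i :: l)).
Proof.
  revert i; induction l as [|j l IH]; intros i.
  - simpl. rewrite app_nil_r. reflexivity.
  - change (prodS x i (j :: l)) with (mulS (x i) (prodS x j l)).
    rewrite word_mulS, IH. reflexivity.
Qed.

Lemma word_prodF (x : nat -> FreeSg) (a : Fin) :
  word (prodF x a) = concat (map (fun k => word (x k)) (fin_list a)).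
Proof. apply word_prodS. Qed.

Lemma word_prodF_gen (a : Fin) : word (prodF gen a) = fin_list a.
Proof.
  rewrite word_prodF. unfold fin_list. generalize (fmin a).
  induction (frest a) as [|j l IH]; intros i; [reflexivity|].
  simpl in *. rewrite IH. reflexivity.
Qed.

Lemma FP_ext (f g : nat -> FreeSg) : (forall n, f n = g n) -> subset (FP f) (FP g).
Proof.
  intros H w [a ->]. exists a. apply word_inj. rewrite !word_prodF.
  f_equal. apply map_ext. intros k. rewrite H. reflexivity.
Qed.

Lemma prodF_app (x : nat -> FreeSg) (d d' e : Fin) :
  fin_list e = fin_list d ++ fin_list d' -> prodF x e = mulS (prodF x d) (prodF x d').
Proof.
  intros He. apply word_inj. rewrite word_mulS, !word_prodF, He, map_app, concat_app.
  reflexivity.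
Qed.

Definition fin_single (n : nat) : Fin := mkFin n [] eq_refl.

Lemma FP_single (x : nat -> FreeSg) (n : nat) : FP x (x n).
Proof. exists (fin_single n). reflexivity. Qed.

Lemma FP_pair (x : nat -> FreeSg) (n m : nat) : n < m -> FP x (mulS (x n) (x m)).
Proof.
  intros Hnm. assert (Hs : sortedb n [m] = true) by (simpl; rewrite andb_true_r; apply Nat.ltb_lt, Hnm).
  exists (mkFin n [m] Hs). reflexivity.
Qed.

Lemma sortedb_app (i j : nat) (l m : list nat) :
  sortedb i (l ++ j :: m) = true <->
  sortedb i l = true /\ last (i :: l) 0 < j /\ sortedb j m = true.
Proof.
  revert i; induction l as [|k l IH]; intros i; simpl.
  - rewrite andb_true_iff, Nat.ltb_lt. tauto.
  - rewrite !andb_true_iff, Nat.ltb_lt, IH. tauto.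
Qed.

Lemma sortedb_le_last (i : nat) (l : list nat) :
  sortedb i l = true -> forall y, In y (i :: l) -> y <= last (i :: l) 0.
Proof.
  revert i; induction l as [|k l IH]; intros i Hs y Hy.
  - destruct Hy as [<-|[]]. simpl. lia.
  - simpl in Hs. apply andb_true_iff in Hs as [Hik Hs]. apply Nat.ltb_lt in Hik.
    change (last (i :: k :: l) 0) with (last (k :: l) 0).
    destruct Hy as [<-|Hy].
    + specialize (IH k Hs k (or_introl eq_refl)). lia.
    + apply IH; assumption.
Qed.

Lemma In_last (i : nat) (l : list nat) : In (last (i :: l) 0) (i :: l).
Proof.
  revert i; induction l as [|k l IH]; intros i; [left; reflexivity|].
  right. apply IH.
Qed.

Lemma le_fmax (a : Fin) (y : nat) : In y (fin_list a) -> y <= fmax a.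
Proof. apply (sortedb_le_last _ _ (fsorted a)). Qed.

Lemma fmin_le_fmax (a : Fin) : fmin a <= fmax a.
Proof. apply le_fmax. left. reflexivity. Qed.

Lemma Fin_eq (a b : Fin) : fin_list a = fin_list b -> a = b.
Proof.
  destruct a as [i l H], b as [i' l' H']; unfold fin_list; simpl.
  intros E; injection E as -> ->. f_equal. apply UIP_dec, bool_dec.
Qed.

Lemma Fin_join (d d' : Fin) :
  fmax d < fmin d' -> exists e : Fin, fin_list e = fin_list d ++ fin_list d'.
Proof.
  intros H.
  assert (Hs : sortedb (fmin d) (frest d ++ fmin d' :: frest d') = true)
    by (apply sortedb_app; split; [apply fsorted | split; [exact H | apply fsorted]]).
  exists (mkFin _ _ Hs). reflexivity.
Qed.

Definition increasing_blocks (B : nat -> Fin) : Prop :=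
  forall m, fmax (B m) < fmin (B (S m)).

Definition blocks_union (B : nat -> Fin) (l : list nat) : list nat :=
  concat (map (fun k => fin_list (B k)) l).

Lemma blocks_union_cons (B : nat -> Fin) (i : nat) (l : list nat) :
  blocks_union B (i :: l) = fin_list (B i) ++ blocks_union B l.
Proof. reflexivity. Qed.

Section Blocks.
Variable B : nat -> Fin.
Hypothesis HB : increasing_blocks B.

Lemma fmin_blocks_lt (i j : nat) : i < j -> fmin (B i) < fmin (B j).
Proof.
  induction j as [|j IH]; intros Hij; [lia|].
  pose proof (fmin_le_fmax (B j)). pose proof (HB j).
  destruct (Nat.eq_dec i j) as [->|Hne]; [lia|].
  specialize (IH ltac:(lia)). lia.
Qed.

Lemma fmin_blocks_le (i j : nat) : i <= j -> fmin (B i) <= fmin (B j).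
Proof.
  intros Hij. destruct (Nat.eq_dec i j) as [->|Hne]; [lia|].
  apply Nat.lt_le_incl, fmin_blocks_lt. lia.
Qed.

Lemma blocks_union_sorted (i : nat) (l : list nat) : sortedb i l = true ->
  sortedb (fmin (B i)) (frest (B i) ++ blocks_union B l) = true.
Proof.
  revert i; induction l as [|j l IH]; intros i Hs.
  - unfold blocks_union. simpl. rewrite app_nil_r. apply fsorted.
  - simpl in Hs. apply andb_true_iff in Hs as [Hij Hs]. apply Nat.ltb_lt in Hij.
    change (blocks_union B (j :: l)) with (fmin (B j) :: (frest (B j) ++ blocks_union B l)).
    apply sortedb_app. split; [apply fsorted|]. split; [|apply IH, Hs].
    change (fmax (B i) < fmin (B j)).
    pose proof (HB i). pose proof (fmin_blocks_le (S i) j ltac:(lia)). lia.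
Qed.

Lemma blocks_union_Fin (c : Fin) : exists e : Fin, fin_list e = blocks_union B (fin_list c).
Proof. exists (mkFin _ _ (blocks_union_sorted _ _ (fsorted c))). reflexivity. Qed.

Lemma fmin_blocks_inj (i i' : nat) : fmin (B i) = fmin (B i') -> i = i'.
Proof.
  intros H. destruct (lt_eq_lt_dec i i') as [[Hlt|]|Hlt]; auto;
    pose proof (fmin_blocks_lt _ _ Hlt); lia.
Qed.

(** Distinct increasing index lists give distinct unions, since the blocks are
    nonempty and increasing. *)
Lemma blocks_union_inj (i i' : nat) (l l' : list nat) :
  sortedb i l = true -> sortedb i' l' = true ->
  blocks_union B (i :: l) = blocks_union B (i' :: l') -> i :: l = i' :: l'.
Proof.
  revert i i' l'; induction l as [|j l IH]; intros i i' l' Hs Hs' H;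
    rewrite !blocks_union_cons in H;
    injection H as Hmin H; apply fmin_blocks_inj in Hmin as <-;
    apply app_inv_head_iff in H.
  - destruct l' as [|j' l']; [reflexivity | discriminate H].
  - destruct l' as [|j' l']; [discriminate H|].
    simpl in Hs, Hs'. apply andb_true_iff in Hs as [_ Hs]. apply andb_true_iff in Hs' as [_ Hs'].
    rewrite (IH j j' l' Hs Hs' H). reflexivity.
Qed.
End Blocks.

(** Concatenation of images commutes with flattening (the list form of
    "a product of products is a product"). *)
Lemma blocks_union_concat (f g : nat -> list nat) (l : list nat) :
  concat (map f (concat (map g l))) = concat (map (fun k => concat (map f (g k))) l).
Proof. induction l as [|i l IH]; simpl; [reflexivity|]. rewrite map_app, concat_app, IH. reflexivity. Qed.

Lemma FP_subsystem (x y : nat -> FreeSg) : product_subsystem x y -> subset (FP y) (FP x).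
Proof.
  intros [B [HB Hy]] w [c ->].
  destruct (blocks_union_Fin B HB c) as [e He]. exists e. apply word_inj.
  rewrite !word_prodF, He. unfold blocks_union. rewrite blocks_union_concat.
  f_equal. apply map_ext. intros k. rewrite Hy, word_prodF. reflexivity.
Qed.

Section GeneratorSubsystem.
Variables (x : nat -> FreeSg) (bl : nat -> Fin).
Hypothesis Hbl : increasing_blocks bl.
Hypothesis Hx : forall n, x n = prodF gen (bl n).

Lemma word_prodF_subsystem (d : Fin) : word (prodF x d) = blocks_union bl (fin_list d).
Proof.
  rewrite word_prodF. unfold blocks_union. f_equal. apply map_ext.
  intros k. rewrite Hx. apply word_prodF_gen.
Qed.

Lemma prodF_subsystem_inj (d d' : Fin) : prodF x d = prodF x d' -> d = d'.
Proof.
  intros H. apply Fin_eq, (blocks_union_inj bl Hbl); try apply fsorted.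
  pose proof (f_equal word H) as Hw. rewrite !word_prodF_subsystem in Hw. exact Hw.
Qed.

Lemma FPF_iff_FP (c : Fin) : FPF bl c <-> FP x (prodF gen c).
Proof.
  split; intros [d Hd]; exists d.
  - apply word_inj. rewrite word_prodF_gen, word_prodF_subsystem. exact Hd.
  - rewrite <- (word_prodF_gen c), Hd, word_prodF_subsystem. reflexivity.
Qed.

(** If another subsystem z of the generators has FP(z) ⊆ FP(x), then the index
    sets d_n with z_n = prodF x d_n are increasing: the first letter of the
    block of x_(max d_n) occurs in z_n, hence before every letter of z_(n+1). *)
Lemma index_sets_increasing (z : nat -> FreeSg) (bl' d : nat -> Fin) :
  increasing_blocks bl' -> (forall n, z n = prodF gen (bl' n)) ->
  (forall n, z n = prodF x (d n)) -> increasing_blocks d.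
Proof.
  intros Hbl' Hz Hzd n.
  assert (Hin : In (fmin (bl (fmax (d n)))) (fin_list (bl' n))).
  { rewrite <- word_prodF_gen, <- Hz, Hzd, word_prodF_subsystem. apply in_concat.
    exists (fin_list (bl (fmax (d n)))).
    split; [apply (in_map (fun k => fin_list (bl k))), In_last | left; reflexivity]. }
  assert (Hnext : fmin (bl' (S n)) = fmin (bl (fmin (d (S n))))).
  { pose proof (f_equal word (eq_trans (eq_sym (Hz (S n))) (Hzd (S n)))) as Hw.
    rewrite word_prodF_gen, word_prodF_subsystem in Hw. injection Hw as Hw _. exact Hw. }
  pose proof (le_fmax _ _ Hin).
  pose proof (Hbl' n).
  destruct (le_lt_dec (fmin (d (S n))) (fmax (d n))) as [Hle|Hlt]; [|exact Hlt].
  pose proof (fmin_blocks_le bl Hbl _ _ Hle). lia.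
Qed.

Lemma subsystem_of_FP_subset (z : nat -> FreeSg) :
  product_subsystem gen z -> subset (FP z) (FP x) -> product_subsystem x z.
Proof.
  intros [bl' [Hbl' Hz]] Hsub.
  assert (Hidx : forall n, exists d, z n = prodF x d) by (intros n; apply Hsub, FP_single).
  apply choice in Hidx as [d Hd].
  exists d. split; [apply (index_sets_increasing z bl') |]; assumption.
Qed.
End GeneratorSubsystem.

Definition pullback {X Y : Type} (f : X -> Y) (p : (Y -> Prop) -> Prop) :
  (X -> Prop) -> Prop :=
  fun B => exists A, p A /\ forall a, B a <-> A (f a).

Lemma ultrafilter_pullback {X Y : Type} (f : X -> Y) (p : (Y -> Prop) -> Prop) :
  ultrafilter p -> (forall a b, f a = f b -> a = b) ->
  p (fun y => exists a, y = f a) -> ultrafilter (pullback f p).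
Proof.
  intros [Htop [Hbot [Hup [Hcap Hcompl]]]] Hinj Hrange.
  (* the image of B ⊆ X, which pulls back to B by injectivity *)
  set (img := fun (B : X -> Prop) y => exists b, B b /\ y = f b).
  assert (Himg : forall B a, img B (f a) <-> B a)
    by (intros B a; split; [intros [b [Hb ->%Hinj]]; exact Hb | intros Ha; exists a; auto]).
  repeat split.
  - exists (fun _ => True). split; [exact Htop | tauto].
  - intros [A [HA HAe]]. apply Hbot, (Hup _ _ (Hcap _ _ HA Hrange)).
    intros y [Hy [a ->]]. exact (proj2 (HAe a) Hy).
  - intros A B [A' [HA' HAe]] HAB. exists (fun y => A' y \/ img B y). split.
    + apply (Hup _ _ HA'). tauto.
    + intros a. cbv beta. rewrite Himg. split; [tauto|]. intros [Ha|Ha]; [apply HAB, HAe, Ha | exact Ha].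
  - intros A B [A' [HA' HAe]] [B' [HB' HBe]]. exists (fun y => A' y /\ B' y).
    split; [apply Hcap; assumption|]. intros a. rewrite HAe, HBe. tauto.
  - intros B. destruct (Hcompl (img B)) as [H|H]; [left|right];
      eexists; (split; [exact H|]); intros a; cbv beta; rewrite Himg; tauto.
Qed.

Lemma vsp_FP_gen (p : (FreeSg -> Prop) -> Prop) : very_strongly_productive p -> p (FP gen).
Proof.
  intros [[Htop [_ [Hup _]]] Hvs].
  destruct (Hvs _ Htop) as [x [Hx [HFPx _]]].
  exact (Hup _ _ HFPx (FP_subsystem gen x Hx)).
Qed.

Lemma vsp_mult_iso_ordered_union (p : (FreeSg -> Prop) -> Prop) :
  very_strongly_productive p -> mult_iso_ordered_union p.
Proof.
  intros Hp. pose proof (vsp_FP_gen p Hp) as HFPgen. destruct Hp as [Hu Hvs].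
  assert (Hinj : forall a b : Fin, prodF gen a = prodF gen b -> a = b)
    by (intros a b H; apply Fin_eq; rewrite <- !word_prodF_gen, H; reflexivity).
  exists gen. split; [exact Hinj|]. split.
  - apply ultrafilter_pullback; assumption.
  - intros B [A [HA HBA]]. destruct (Hvs A HA) as [x [[bl [Hbl Hx]] [HFPx HxA]]].
    exists bl. split; [exact Hbl|]. split.
    + exists (FP x). split; [exact HFPx|]. intros c. apply FPF_iff_FP; assumption.
    + intros c Hc. apply HBA, HxA. apply (FPF_iff_FP x bl Hx). exact Hc.
Qed.

(** The number of maximal intervals ("runs") of a finite set of naturals; it
    is additive on ordered unions except that two adjacent runs merge. *)
Fixpoint runs_from (i : nat) (l : list nat) : nat :=
  match l with
  | [] => 1
  | j :: l' => (if j =? S i then 0 else 1) + runs_from j l'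
  end.

Definition runs (d : Fin) : nat := runs_from (fmin d) (frest d).

Definition adjacent (d d' : Fin) : bool := fmin d' =? S (fmax d).

Lemma runs_from_app (i j : nat) (l m : list nat) :
  runs_from i (l ++ j :: m) + (if j =? S (last (i :: l) 0) then 1 else 0) =
  runs_from i l + runs_from j m.
Proof.
  revert i; induction l as [|k l IH]; intros i; simpl.
  - destruct (j =? S i); lia.
  - specialize (IH k). destruct (k =? S i); simpl in *; lia.
Qed.

Lemma runs_join (d d' e : Fin) : fin_list e = fin_list d ++ fin_list d' ->
  runs e + (if adjacent d d' then 1 else 0) = runs d + runs d'.
Proof.
  destruct e as [i l Hs]. unfold fin_list. simpl. intros He. injection He as -> ->.
  apply runs_from_app.
Qed.

Lemma runs_join_parity (d d' e : Fin) : fin_list e = fin_list d ++ fin_list d' ->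
  Nat.even (runs e + (if adjacent d d' then 1 else 0)) =
  Bool.eqb (Nat.even (runs d)) (Nat.even (runs d')).
Proof. intros He. rewrite (runs_join d d' e He). apply Nat.even_add. Qed.

Definition even_runs (x : nat -> FreeSg) : FreeSg -> Prop :=
  fun w => exists d, w = prodF x d /\ Nat.even (runs d) = true.

(** For a subsystem x of the generators, index sets are determined by their
    products, so the parity of the runs of a product over x is well defined. *)
Section RunsParity.
Variables (x : nat -> FreeSg) (bl : nat -> Fin).
Hypothesis Hbl : increasing_blocks bl.
Hypothesis Hx : forall n, x n = prodF gen (bl n).
Variables (z : nat -> FreeSg) (d : nat -> Fin).
Hypothesis Hd : increasing_blocks d.
Hypothesis Hzd : forall n, z n = prodF x (d n).

Lemma even_runs_prodF (a : Fin) : even_runs x (prodF x a) <-> Nat.even (runs a) = true.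
Proof.
  split; [|intros Ha; exists a; auto].
  intros [a' [Haa' Ha']]. apply (prodF_subsystem_inj x bl Hbl Hx) in Haa' as ->. exact Ha'.
Qed.

(** If FP(z) has only even products, then d_n ∪ d_(n+1) has even runs although
    d_n and d_(n+1) do, so they are not adjacent. *)
Lemma even_runs_gaps :
  subset (FP z) (even_runs x) -> forall n, S (fmax (d n)) < fmin (d (S n)).
Proof.
  intros Hsub n.
  assert (Hterm : forall m, Nat.even (runs (d m)) = true)
    by (intros m; apply even_runs_prodF; rewrite <- Hzd; apply Hsub, FP_single).
  destruct (Fin_join (d n) (d (S n)) (Hd n)) as [e He].
  assert (Hjoin : Nat.even (runs e) = true).
  { apply even_runs_prodF. rewrite (prodF_app x _ _ _ He), <- !Hzd.
    apply Hsub, FP_pair. lia. }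
  pose proof (runs_join_parity _ _ _ He) as Hpar.
  rewrite Nat.even_add, Hjoin, !Hterm in Hpar. unfold adjacent in Hpar.
  destruct (fmin (d (S n)) =? S (fmax (d n))) eqn:Hadj; [discriminate Hpar|].
  apply Nat.eqb_neq in Hadj. pose proof (Hd n). lia.
Qed.

(** FP(z) cannot consist of odd products only: d_0 and d_2 are not adjacent,
    so d_0 ∪ d_2 would have an even number of runs. *)
Lemma odd_runs_impossible : ~ subset (FP z) (fun w => ~ even_runs x w).
Proof.
  intros Hsub.
  assert (Hterm : forall m, Nat.even (runs (d m)) = false).
  { intros m. destruct (Nat.even (runs (d m))) eqn:Hm; [|reflexivity].
    exfalso. apply (Hsub (z m) (FP_single z m)). rewrite Hzd. apply even_runs_prodF, Hm. }
  assert (Hgap : S (fmax (d 0)) < fmin (d 2))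
    by (pose proof (Hd 0); pose proof (Hd 1); pose proof (fmin_le_fmax (d 1)); lia).
  destruct (Fin_join (d 0) (d 2) ltac:(lia)) as [e He].
  apply (Hsub _ (FP_pair z 0 2 ltac:(lia))).
  rewrite !Hzd, <- (prodF_app x _ _ _ He). apply even_runs_prodF.
  pose proof (runs_join_parity _ _ _ He) as Hpar.
  rewrite !Hterm in Hpar. unfold adjacent in Hpar.
  replace (fmin (d 2) =? S (fmax (d 0))) with false in Hpar
    by (symmetry; apply Nat.eqb_neq; lia).
  rewrite Nat.add_0_r in Hpar. exact Hpar.
Qed.
End RunsParity.

(** If z_n = prodF x d_n where consecutive index sets leave a gap, then
    inserting the product over the singleton just after each d_n gives a
    subsystem x' of x with x'_(2n) = z_n. *)
Lemma gaps_interleave (x z : nat -> FreeSg) (d : nat -> Fin) :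
  (forall n, S (fmax (d n)) < fmin (d (S n))) -> (forall n, z n = prodF x (d n)) ->
  exists x', product_subsystem x x' /\ forall n, x' (2 * n) = z n.
Proof.
  intros Hgap Hzd.
  set (B := fun m => if Nat.even m then d (Nat.div2 m)
                     else fin_single (S (fmax (d (Nat.div2 m))))).
  assert (Beven : forall n, B (2 * n) = d n)
    by (intros n; unfold B; rewrite Nat.even_even, Nat.div2_double; reflexivity).
  assert (Bodd : forall n, B (S (2 * n)) = fin_single (S (fmax (d n)))).
  { intros n. unfold B. rewrite Nat.div2_succ_double, Nat.even_succ, Nat.odd_even.
    reflexivity. }
  exists (fun m => prodF x (B m)). split.
  - exists B. split; [|reflexivity]. intros m.
    destruct (Nat.Even_or_Odd m) as [[n ->]|[n ->]].
    + rewrite Bodd, Beven. simpl. lia.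
    + replace (2 * n + 1) with (S (2 * n)) by lia.
      replace (S (S (2 * n))) with (2 * S n) by lia.
      rewrite Bodd, Beven. apply Hgap.
  - intros n. rewrite Beven, Hzd. reflexivity.
Qed.

Lemma vsp_refine (p : (FreeSg -> Prop) -> Prop) (x : nat -> FreeSg) (C : FreeSg -> Prop) :
  very_strongly_productive p -> product_subsystem gen x -> p (FP x) -> p C ->
  exists z, product_subsystem x z /\ p (FP z) /\ subset (FP z) C.
Proof.
  intros [[_ [_ [_ [Hcap _]]]] Hvs] [bl [Hbl Hx]] HFPx HC.
  destruct (Hvs _ (Hcap _ _ HFPx HC)) as [z [Hz [HFPz Hsub]]].
  exists z. split; [|split; [exact HFPz | intros w Hw; apply Hsub, Hw]].
  apply (subsystem_of_FP_subset x bl Hbl Hx z Hz). intros w Hw. apply Hsub, Hw.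
Qed.

(** Refine FP(x) ⊆ A to FP(z) of one runs-parity; it must be the even
    one, which forces gaps, and interleaving fills them with coinfinitely many
    new terms. *)
Lemma vsp_sparse (p : (FreeSg -> Prop) -> Prop) : very_strongly_productive p -> sparse p.
Proof.
  intros Hp A HA. pose proof Hp as [[_ [_ [Hup [_ Hcompl]]]] Hvs].
  destruct (Hvs A HA) as [x [Hx [HFPx HxA]]]. pose proof Hx as [bl [Hbl Hxbl]].
  destruct (Hcompl (even_runs x)) as [Heven|Hodd].
  - destruct (vsp_refine p x _ Hp Hx HFPx Heven) as [z [[d [Hd Hzd]] [HFPz Hsub]]].
    pose proof (even_runs_gaps x bl Hbl Hxbl z d Hd Hzd Hsub) as Hgap.
    destruct (gaps_interleave x z d Hgap Hzd) as [x' [Hx' Hx'z]].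
    exists x', (fun n => 2 * n). split; [intros n; lia|]. split; [|split].
    + apply (Hup _ _ HFPz), FP_ext. intros n. symmetry. apply Hx'z.
    + intros w Hw. apply HxA, (FP_subsystem x x' Hx'), Hw.
    + intros m. exists (S (2 * m)). split; [lia | intros i; lia].
  - destruct (vsp_refine p x _ Hp Hx HFPx Hodd) as [z [[d [Hd Hzd]] [_ Hsub]]].
    destruct (odd_runs_impossible x bl Hbl Hxbl z d Hd Hzd Hsub).
Qed.

Theorem mainTheorem17 :
  forall p : (FreeSg -> Prop) -> Prop,
    very_strongly_productive p ->
    mult_iso_ordered_union p /\ sparse p.
Proof.
  intros p Hp. split.
  - apply vsp_mult_iso_ordered_union, Hp.
  - apply vsp_sparse, Hp.
Qed.
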